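(* If $n=p_1^{m_1}p_2^{m_2}$ with primes $p_1<p_2$, positive integers $m_1,m_2$, and $m_i>1$ for at least one $i$, then $\mathcal E_{\mathbb Z_n}$ is Laplacian integral.
   Context: The essential ideal graph $\mathcal E_{\mathbb Z_n}$ has vertices the nonzero proper ideals of $\mathbb Z_n$, with distinct $I,K$ adjacent iff $I+K$ is an essential ideal (an ideal meeting every nonzero ideal nontrivially). A graph is Laplacian integral if all eigenvalues of its Laplacian matrix $D-A$ are integers. *)

From mathcomp Require Import all_boot all_order all_algebra all_field.
Set Implicit Arguments. Unset Strict Implicit. Unset Printing Implicit Defensive.
Import Order.TTheory GRing.Theory Num.Theory.
Local Open Scope ring_scope.

Definition is_ideal (n : nat) (I : {set 'Z_n}) : bool :=
  [&& (0 : 'Z_n) \in I,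
      [forall x in I, forall y in I, x + y \in I]
    & [forall r : 'Z_n, forall x in I, r * x \in I]].

Definition ideal_add (n : nat) (I K : {set 'Z_n}) : {set 'Z_n} :=
  [set x + y | x in I, y in K].

Definition is_essential (n : nat) (I : {set 'Z_n}) : bool :=
  is_ideal I &&
  [forall J : {set 'Z_n}, (is_ideal J && (J != [set 0])) ==> (I :&: J != [set 0])].

Definition is_vertex (n : nat) (I : {set 'Z_n}) : bool :=
  [&& is_ideal I, I != [set 0] & I != [set: 'Z_n]].

Definition EV (n : nat) := { I : {set 'Z_n} | is_vertex I }.

Definition essential_adj (n : nat) : rel (EV n) :=
  fun I K => (I != K) && is_essential (ideal_add (val I) (val K)).

Definition laplacian (T : finType) (e : rel T) : 'M[algC]_#|T| :=
  \matrix_(i, j)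
    if i == j then (#|[set y | e (enum_val i) y]|)%:R
    else - ((e (enum_val i) (enum_val j) : nat)%:R).

Definition laplacian_integral (T : finType) (e : rel T) : Prop :=
  forall a : algC, eigenvalue (laplacian e) a -> a \is a Num.int.

From mathcomp Require Import all_boot all_order all_algebra all_field.
From mathcomp Require Import ring.
Set Implicit Arguments. Unset Strict Implicit. Unset Printing Implicit Defensive.
Import Order.TTheory GRing.Theory Num.Theory.
Local Open Scope ring_scope.

(* The minimal ideals of Z_n, for n = p^a q^b, are generated by n/p and n/q, and
   an ideal is essential iff it contains both.  An ideal I misses n/p iff p^a
   divides all its elements, so n/p lies in I + K iff it lies in I or in K.
   Hence two distinct vertices are adjacent iff together they contain both
   generators: the graph is complete multipartite, with one part made of the
   ideals missing n/p, one of the ideals missing n/q, and a singleton for each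
   ideal containing both.
   A complete multipartite graph on N vertices has its Laplacian eigenvalues in
   {0, N} and {N - |P| : P a part}: summing the eigenvector equation over all
   vertices, and over each part, shows that for any other eigenvalue the
   eigenvector sums to 0 on every part, and then the equation at a vertex x
   reduces to multiplication by N - |P(x)|. *)

Section CompleteMultipartite.

Variables (T : finType) (K : eqType) (part : T -> K) (e : rel T).
Hypothesis eE : e =2 (fun x y => part x != part y).

Let N := #|T|.
Let part_size x : nat := #|[set y | part y == part x]|.

Lemma card_multipartite_nbhd x : #|[set y | e x y]| = (N - part_size x)%N.
Proof.
rewrite (cardsCs [set y | e x y]); congr (_ - _)%N.
by apply: eq_card => y; rewrite !inE eE negbK eq_sym.
Qed.

Lemma laplacian_multipartiteE i j :
  laplacian e i j = (i == j)%:R * (N%:R - (part_size (enum_val i))%:R)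
                    + (part (enum_val i) == part (enum_val j))%:R - 1.
Proof.
rewrite /laplacian mxE card_multipartite_nbhd natrB; last exact: max_card.
case: eqVneq => [->|_]; first by rewrite !eqxx mul1r /= addrK.
rewrite eE mul0r add0r.
by case: (_ == _); rewrite /= ?mulr0n ?mulr1n ?oppr0 ?subrr ?sub0r.
Qed.

Section Eigenvector.

Variables (a : algC) (v : 'rV[algC]_N).
Hypothesis eigen_v : v *m laplacian e = a *: v.

Let w x := v 0 (enum_rank x).
Let total := \sum_y w y.
Let part_sum x := \sum_(y | part y == part x) w y.

Lemma eigen_entry x : a * w x = (N%:R - (part_size x)%:R) * w x + part_sum x - total.
Proof.
have := congr1 (fun u : 'rV_N => u 0 (enum_rank x)) eigen_v; rewrite !mxE => <-.
rewrite (reindex enum_rank) /=; last by apply: onW_bij; exact: enum_rank_bij.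
under eq_bigr do rewrite laplacian_multipartiteE !enum_rankK (inj_eq enum_rank_inj) mulrBr mulrDr mulr1.
rewrite big_split big_split /= (bigD1 x) //= big1 => [|y /negbTE->]; last by rewrite mul0r mulr0.
rewrite eqxx mul1r addr0 sumrN mulrC /part_sum /=.
congr (_ + _ - _); rewrite [RHS]big_mkcond; apply: eq_bigr => y _.
by case: (_ == _); rewrite ?mulr1 ?mulr0.
Qed.

Lemma sum_part_sum : \sum_x part_sum x = \sum_x (part_size x)%:R * w x.
Proof.
rewrite (exchange_big_dep xpredT) //=; apply: eq_bigr => y _.
rewrite sumr_const [RHS]mulr_natl; congr (_ *+ _).
by apply: eq_card => x; rewrite inE eq_sym.
Qed.

Lemma eigen_total : a * total = 0.
Proof.
rewrite /total mulr_sumr (eq_bigr _ (fun x _ => eigen_entry x)).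
rewrite !big_split /= sumrN sum_part_sum.
under eq_bigr do rewrite mulrBl.
by rewrite big_split /= sumrN -mulr_sumr sumr_const subrK mulr_natl subrr.
Qed.

Lemma eigen_part_sum z : a * part_sum z = N%:R * part_sum z - (part_size z)%:R * total.
Proof.
have same_part x : part x == part z -> part_size x = part_size z /\ part_sum x = part_sum z.
  by rewrite /part_size /part_sum => /eqP ->.
rewrite {1}/part_sum mulr_sumr.
rewrite (eq_bigr (fun x => (N%:R - (part_size z)%:R) * w x + part_sum z - total)); last first.
  by move=> x /same_part[<- <-]; exact: eigen_entry.
rewrite !big_split /= sumrN -mulr_sumr !sumr_const -/(part_sum z).
have -> : #|[pred x | part x == part z]| = part_size z by apply: eq_card => x; rewrite inE.
ring.
Qed.

Lemma multipartite_eigenvalue_int : v != 0 -> a \is a Num.int.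
Proof.
move=> v_neq0.
have [->|a_neq0] := eqVneq a 0; first exact: rpred0.
have [->|a_neqN] := eqVneq a N%:R; first exact: natr_int.
have total0 : total = 0.
  by apply/eqP; move/eqP: eigen_total; rewrite mulf_eq0 (negbTE a_neq0).
have part_sum0 x : part_sum x = 0.
  apply/eqP; move/eqP: (eigen_part_sum x); rewrite total0 mulr0 subr0.
  by rewrite -subr_eq0 -mulrBl mulf_eq0 subr_eq0 (negbTE a_neqN).
have /rV0Pn[i v_i] := v_neq0.
have w_neq0 : w (enum_val i) != 0 by rewrite /w enum_valK.
have := eigen_entry (enum_val i).
rewrite part_sum0 total0 addr0 subr0 => /(mulIf w_neq0) ->.
by rewrite rpredB ?natr_int.
Qed.

End Eigenvector.

Theorem laplacian_integral_multipartite : laplacian_integral e.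
Proof.
by move=> a /eigenvalueP [v eigen_v v_neq0]; exact: multipartite_eigenvalue_int eigen_v v_neq0.
Qed.
End CompleteMultipartite.

Lemma set1_neq_mem (T : finType) (A : {set T}) x :
  x \in A -> A != [set x] -> exists2 y, y \in A & y != x.
Proof.
move=> xA A_neq1; have /set0Pn[y] : A :\ x != set0.
  by apply: contraNneq A_neq1 => A_x0; rewrite -(setD1K xA) A_x0 setU0.
by rewrite !inE => /andP[y_neq_x yA]; exists y.
Qed.

Lemma dvdn_modr d m k : (d %| m)%N -> (d %| k %% m)%N = (d %| k)%N.
Proof. by move=> d_dvd_m; rewrite /dvdn (modn_dvdm _ d_dvd_m). Qed.

Section Ideals.

Variable n : nat.
Implicit Types (I K : {set 'Z_n}) (u v : 'Z_n).

Lemma ideal0 I : is_ideal I -> 0 \in I.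
Proof. by case/and3P. Qed.

Lemma idealD I u v : is_ideal I -> u \in I -> v \in I -> u + v \in I.
Proof. by case/and3P => _ /forall_inP addI _ uI vI; move/forall_inP: (addI u uI); apply. Qed.

Lemma idealMl I r u : is_ideal I -> u \in I -> r * u \in I.
Proof. by case/and3P => _ _ /forallP mulI uI; move/forall_inP: (mulI r); apply. Qed.

Lemma is_ideal_add I K : is_ideal I -> is_ideal K -> is_ideal (ideal_add I K).
Proof.
move=> idI idK; apply/and3P; split.
- by rewrite -[0]addr0; apply: imset2_f; apply: ideal0.
- apply/forall_inP => _ /imset2P[u1 v1 u1I v1K ->].
  apply/forall_inP => _ /imset2P[u2 v2 u2I v2K ->].
  by rewrite addrACA; apply: imset2_f; apply: idealD.
- apply/forallP => r; apply/forall_inP => _ /imset2P[u v uI vK ->].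
  by rewrite mulrDr; apply: imset2_f; apply: idealMl.
Qed.

Lemma mem_ideal_addl I K u : is_ideal K -> u \in I -> u \in ideal_add I K.
Proof. by move=> idK uI; rewrite -[u]addr0; apply: imset2_f => //; apply: ideal0. Qed.

Lemma mem_ideal_addr I K u : is_ideal I -> u \in K -> u \in ideal_add I K.
Proof. by move=> idI uK; rewrite -[u]add0r; apply: imset2_f => //; apply: ideal0. Qed.

Hypothesis n_gt1 : (1 < n)%N.

Lemma val_Zp_add u v : val (u + v) = ((val u + val v) %% n)%N.
Proof. by congr (_ %% _)%N; exact: Zp_cast. Qed.

Lemma val_Zp_mul u v : val (u * v) = ((val u * val v) %% n)%N.
Proof. by congr (_ %% _)%N; exact: Zp_cast. Qed.

Lemma Zp_dvdn_eq0 u : (n %| val u)%N -> u = 0.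
Proof.
have u_lt_n : (val u < n)%N by apply: leq_trans (ltn_ord u) _; rewrite Zp_cast.
by rewrite /dvdn modn_small // => /eqP u0; apply: val_inj.
Qed.

Lemma is_ideal_multiples d : (d %| n)%N -> is_ideal [set u : 'Z_n | (d %| val u)%N].
Proof.
move=> d_dvd_n; apply/and3P; split; first by rewrite inE dvdn0.
  apply/forall_inP => u; rewrite inE => du; apply/forall_inP => v; rewrite inE => dv.
  by rewrite inE val_Zp_add (dvdn_modr _ d_dvd_n) dvdn_add.
apply/forallP => r; apply/forall_inP => u; rewrite inE => du.
by rewrite inE val_Zp_mul (dvdn_modr _ d_dvd_n) dvdn_mull.
Qed.

Lemma mem_ideal_natr_dvd I u d :
  is_ideal I -> u \in I -> (gcdn (val u) n %| d)%N -> (d%:R : 'Z_n) \in I.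
Proof.
move=> idI uI /dvdnP[k ->]; rewrite natrM; apply: (idealMl _ idI).
have [u0|u_gt0] := posnP u; first by rewrite /= u0 gcd0n pchar_Zp // (ideal0 idI).
have [km kn bezout _] := egcdnP n u_gt0.
have -> : ((gcdn (val u) n)%:R : 'Z_n) = km%:R * u.
  by rewrite -[u in RHS]natr_Zp -natrM bezout natrD natrM pchar_Zp // mulr0 add0r.
exact: idealMl.
Qed.

End Ideals.

Definition socle n p : 'Z_n := (n %/ p)%:R.

Section Socle.

Variables (n p a c : nat).
Hypotheses (p_pr : prime p) (a_gt0 : (0 < a)%N) (p_coprime_c : coprime p c).
Hypothesis nE : n = (p ^ a * c)%N.

Let p_gt1 := prime_gt1 p_pr.

Lemma divn_primeE : (n %/ p)%N = (p ^ a.-1 * c)%N.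
Proof. by rewrite nE -(prednK a_gt0) expnS -mulnA mulKn ?prime_gt0. Qed.

Let c_gt0 : (0 < c)%N.
Proof. by rewrite lt0n; apply: contraTneq p_coprime_c => ->; rewrite /coprime gcdn0 gtn_eqF. Qed.

Let n_gt1 : (1 < n)%N.
Proof. by rewrite nE (leq_trans p_gt1) // -(prednK a_gt0) expnS -mulnA leq_pmulr // muln_gt0 expn_gt0 ltnW. Qed.

Let p_dvd_n : (p %| n)%N.
Proof. by rewrite nE -(prednK a_gt0) expnS -mulnA dvdn_mulr. Qed.

Lemma pfactor_ndvd_socle : ~~ (p ^ a %| n %/ p)%N.
Proof.
rewrite divn_primeE Gauss_dvdl ?coprimeXl //.
by rewrite dvdn_Pexp2l // -ltnNge prednK.
Qed.

Lemma val_socle : val (socle n p) = (n %/ p)%N.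
Proof. by rewrite /= val_Zp_nat // modn_small // ltn_Pdiv // ltnW. Qed.

Lemma socle_neq0 : socle n p != 0.
Proof.
apply: contraNneq pfactor_ndvd_socle => /(congr1 val).
by rewrite val_socle => ->; exact: dvdn0.
Qed.

Lemma dvdn_socle_pfactor x : (n %/ p %| x)%N -> (p ^ a %| x)%N -> (n %| x)%N.
Proof.
move=> socle_x pa_x; rewrite nE Gauss_dvd ?coprimeXl // pa_x.
by apply: dvdn_trans socle_x; rewrite divn_primeE dvdn_mull.
Qed.

Lemma socle_mem_ideal I u :
  is_ideal I -> u \in I -> ~~ (p ^ a %| val u)%N -> socle n p \in I.
Proof.
move=> idI uI u_ndvd; apply: (mem_ideal_natr_dvd n_gt1 idI uI).
(* [g] divides [n %/ p] unless [p] is coprime to [n %/ g], which forces [p ^ a %| g]. *)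
set g := gcdn (val u) n; have g_dvd_n : (g %| n)%N := dvdn_gcdr _ _.
rewrite dvdn_divRL // mulnC -dvdn_divRL //; apply: contraR u_ndvd => p_ndvd.
have cop : coprime (p ^ a) (n %/ g) by rewrite coprime_pexpl // prime_coprime.
apply: dvdn_trans (dvdn_gcdl _ n); rewrite -/g.
by rewrite -(Gauss_dvdr g cop) divnK // nE dvdn_mulr.
Qed.

Lemma socle_mem_add I K : is_ideal I -> is_ideal K ->
  (socle n p \in ideal_add I K) = (socle n p \in I) || (socle n p \in K).
Proof.
move=> idI idK; apply/idP/idP => [|/orP[sI|sK]]; last 2 first.
- exact: mem_ideal_addl.
- exact: mem_ideal_addr.
case/imset2P => u v uI vK s_uv; apply: contraT; rewrite negb_or => /andP[sNI sNK].
have u_dvd : (p ^ a %| val u)%N by apply: contraR sNI; exact: socle_mem_ideal.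
have v_dvd : (p ^ a %| val v)%N by apply: contraR sNK; exact: socle_mem_ideal.
have : (p ^ a %| val (u + v)%R)%N.
  by rewrite val_Zp_add // dvdn_modr ?nE ?dvdn_mulr // dvdn_add.
by rewrite -s_uv val_socle (negbTE pfactor_ndvd_socle).
Qed.

Lemma socle_mem_essential I : is_essential I -> socle n p \in I.
Proof.
case/andP=> idI /forallP essI.
(* A nonzero multiple of n/p is not divisible by p^a. *)
pose J := [set u : 'Z_n | (n %/ p %| val u)%N].
have idJ : is_ideal J by apply: is_ideal_multiples => //; exact: dvdn_div.
have sJ : socle n p \in J by rewrite inE val_socle.
have J_neq0 : J != [set 0].
  by apply: contraTneq sJ => ->; rewrite inE socle_neq0.
have := essI J; rewrite idJ J_neq0 /= => IJ_neq0.
have IJ0 : 0 \in I :&: J by rewrite inE !ideal0.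
have [w] := set1_neq_mem IJ0 IJ_neq0; rewrite inE => /andP[wI wJ] w_neq0.
apply: (socle_mem_ideal idI wI); apply: contra w_neq0 => pa_w.
apply/eqP/(Zp_dvdn_eq0 n_gt1)/(dvdn_socle_pfactor _ pa_w).
by rewrite inE in wJ.
Qed.

End Socle.

Section TwoPrimes.

Variables (n p q a b : nat).
Hypotheses (p_pr : prime p) (q_pr : prime q) (p_neq_q : p != q).
Hypotheses (a_gt0 : (0 < a)%N) (b_gt0 : (0 < b)%N) (nE : n = (p ^ a * q ^ b)%N).

Let p_coprime_qb : coprime p (q ^ b).
Proof. by rewrite coprime_pexpr // prime_coprime // dvdn_prime2. Qed.

Let q_coprime_pa : coprime q (p ^ a).
Proof. by rewrite coprime_pexpr // prime_coprime // dvdn_prime2 // eq_sym. Qed.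

Let nE' : n = (q ^ b * p ^ a)%N. Proof. by rewrite mulnC. Qed.

Let n_gt1 : (1 < n)%N.
Proof.
rewrite nE (leq_trans (prime_gt1 p_pr)) // dvdn_leq ?muln_gt0 ?expn_gt0 ?prime_gt0 //.
by rewrite dvdn_mulr // dvdn_exp.
Qed.

Lemma ideal_neq0_socle J :
  is_ideal J -> J != [set 0] -> (socle n p \in J) || (socle n q \in J).
Proof.
move=> idJ J_neq0; have [w wJ w_neq0] := set1_neq_mem (ideal0 idJ) J_neq0.
apply: contraR w_neq0; rewrite negb_or => /andP[spJ sqJ].
have pa_w : (p ^ a %| val w)%N.
  by apply: contraR spJ; exact: (socle_mem_ideal p_pr a_gt0 p_coprime_qb nE idJ wJ).
have qb_w : (q ^ b %| val w)%N.
  by apply: contraR sqJ; exact: (socle_mem_ideal q_pr b_gt0 q_coprime_pa nE' idJ wJ).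
apply/eqP/(Zp_dvdn_eq0 n_gt1).
have : (p ^ a * q ^ b %| val w)%N by rewrite Gauss_dvd ?pa_w // coprime_pexpl.
by rewrite -nE.
Qed.

Lemma is_essentialE I :
  is_ideal I -> is_essential I = (socle n p \in I) && (socle n q \in I).
Proof.
move=> idI; apply/idP/andP => [essI|[spI sqI]].
  split; first exact: (socle_mem_essential p_pr a_gt0 p_coprime_qb nE essI).
  exact: (socle_mem_essential q_pr b_gt0 q_coprime_pa nE' essI).
rewrite /is_essential idI; apply/forallP => J; apply/implyP => /andP[idJ J_neq0].
have [s [sI sJ s_neq0]] : exists s, [/\ s \in I, s \in J & s != 0].
  case/orP: (ideal_neq0_socle idJ J_neq0) => sJ; [exists (socle n p) | exists (socle n q)].
    by split=> //; exact: (socle_neq0 p_pr a_gt0 p_coprime_qb nE).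
  by split=> //; exact: (socle_neq0 q_pr b_gt0 q_coprime_pa nE').
apply: contraNneq s_neq0 => IJ0.
by rewrite -in_set1 -IJ0 inE sI.
Qed.

Definition vertex_part (x : EV n) : bool + EV n :=
  if socle n p \notin val x then inl true
  else if socle n q \notin val x then inl false
  else inr x.

Lemma essential_adjE : @essential_adj n =2 (fun x y => vertex_part x != vertex_part y).
Proof.
move=> x y; have [idx x_neq0 _] := and3P (valP x); have [idy y_neq0 _] := and3P (valP y).
rewrite /essential_adj is_essentialE ?is_ideal_add //.
rewrite (socle_mem_add p_pr a_gt0 p_coprime_qb nE) // (socle_mem_add q_pr b_gt0 q_coprime_pa nE') //.
have := ideal_neq0_socle idx x_neq0; have := ideal_neq0_socle idy y_neq0.
rewrite /vertex_part; case: eqVneq => [->|x_neq_y]; first by rewrite eqxx.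
by case: (socle n p \in val x); case: (socle n q \in val x);
   case: (socle n p \in val y); case: (socle n q \in val y).
Qed.

End TwoPrimes.

Local Close Scope ring_scope.

Theorem mainTheorem13 (n p1 p2 m1 m2 : nat) :
  prime p1 -> prime p2 -> p1 < p2 -> 0 < m1 -> 0 < m2 -> (1 < m1) || (1 < m2) ->
  n = p1 ^ m1 * p2 ^ m2 ->
  laplacian_integral (@essential_adj n).
Proof.
move=> p1_pr p2_pr p1_lt_p2 m1_gt0 m2_gt0 _ nE.
have p1_neq_p2 : p1 != p2 by rewrite ltn_eqF.
exact: laplacian_integral_multipartite (essential_adjE p1_pr p2_pr p1_neq_p2 m1_gt0 m2_gt0 nE).
Qed.
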